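(* The recurrence $x_n=x_{n-1}+x_{n-2}+2x_{n-3}$ is not congenial; that is, there is no finite bound $B$ such that for every positive integer $n$, either $t_{1,1,2}(n)=\infty$ or $t_{1,1,2}(n)\le B$.
   Context: For non-negative integers $a,b,c$, a positive $k$-element solution of the recurrence $x_i=ax_{i-1}+bx_{i-2}+cx_{i-3}$ is an integer sequence $\langle x_i\rangle_{i=1}^k$ satisfying the recurrence for $4\le i\le k$ with $x_1,x_2,x_3>0$; it terminates at $x_k$. For a positive integer $n$, $k_{a,b,c}(n)$ is the largest $k$ such that there is a positive $k$-element solution terminating at $n$, and $t_{a,b,c}(n)$ is the number of positive $k_{a,b,c}(n)$-element solutions terminating at $n$. The recurrence is congenial if there is a finite $B$ such that for all $n$, $t_{a,b,c}(n)=\infty$ or $t_{a,b,c}(n)\le B$. *)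

From mathcomp Require Import all_boot all_order all_algebra.
Set Implicit Arguments. Unset Strict Implicit. Unset Printing Implicit Defensive.
Import GRing.Theory Num.Theory.
Local Open Scope ring_scope.

(* A k-element sequence <x_1,...,x_k> is represented by s : seq int of size k,
   with x_(i+1) = nth 0 s i. *)

Definition pos_solution (a b c : nat) (s : seq int) : Prop :=
  (3 <= size s)%N /\
  0 < nth 0 s 0 /\ 0 < nth 0 s 1 /\ 0 < nth 0 s 2 /\
  forall i : nat, (3 <= i < size s)%N ->
    nth 0 s i = a%:Z * nth 0 s (i - 1)%N + b%:Z * nth 0 s (i - 2)%N + c%:Z * nth 0 s (i - 3)%N.

Definition terminates_at (s : seq int) (n : nat) : Prop :=
  nth 0 s (size s).-1 = n%:Z.

(* solutions counted by t_{a,b,c}(n) when k = k_{a,b,c}(n) *)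
Definition sol_kn (a b c n k : nat) (s : seq int) : Prop :=
  pos_solution a b c s /\ size s = k /\ terminates_at s n.

Definition is_k (a b c n k : nat) : Prop :=
  (exists s, sol_kn a b c n k s) /\
  forall s, pos_solution a b c s -> terminates_at s n -> (size s <= k)%N.

Definition t_infinite (a b c n k : nat) : Prop :=
  forall l : seq (seq int), exists s, sol_kn a b c n k s /\ s \notin l.

Definition t_le (a b c n k B : nat) : Prop :=
  exists l : seq (seq int), (size l <= B)%N /\
    forall s, sol_kn a b c n k s -> s \in l.

Definition congenial (a b c : nat) : Prop :=
  exists B : nat, forall n : nat, (0 < n)%N -> forall k : nat, is_k a b c n k ->
    t_infinite a b c n k \/ t_le a b c n k B.

From mathcomp Require Import all_boot all_order all_algebra.
From mathcomp Require Import zify.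
Set Implicit Arguments. Unset Strict Implicit. Unset Printing Implicit Defensive.
Import GRing.Theory Num.Theory.
Local Open Scope ring_scope.

(* Since t^3 - t^2 - t - 2 = (t - 2)(t^2 + t + 1), a solution x_0, x_1, ...
   with initial sum S = x_0 + x_1 + x_2 satisfies 7 x_i = 2^i S + d_i, where
   d is 3-periodic with d_0 + d_1 + d_2 = 0 and -4S < d_i < 6S.
   Fix S odd and m = 3(S + 4). The S - 2 solutions starting (1, j + 1, S - 2 - j)
   all reach the same n at index m, since 7n = 2^m S + 7 - S. A longer solution
   ending at n would write 7n as 2^m times an even number plus a small error,
   impossible since S is odd and 2^m is large; so k(n) = m + 1. Solutions of
   that length have initial sum below n, so t(n) is finite, yet t(n) >= S - 2.
   Taking S = 2B + 3 defeats any bound B. *)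

Fixpoint linrec (a b c : nat) (x y z : int) (i : nat) : int :=
  if i is i'.+1 then linrec a b c y z (a%:Z * z + b%:Z * y + c%:Z * x) i' else x.

Section LinearRecurrence.
Variables a b c : nat.

Lemma linrec_rec x y z i :
  linrec a b c x y z i.+3 =
  a%:Z * linrec a b c x y z i.+2 + b%:Z * linrec a b c x y z i.+1
  + c%:Z * linrec a b c x y z i.
Proof. by elim: i x y z => [|i IH] x y z //; exact: IH. Qed.

Lemma pos_solution_nth s i : pos_solution a b c s -> (i < size s)%N ->
  s`_i = linrec a b c s`_0 s`_1 s`_2 i.
Proof.
case=> _ [_ [_ [_ rec]]]; elim/ltn_ind: i => -[|[|[|i]]] IH lt_i //.
by rewrite rec ?subSS ?subn0 ?linrec_rec -?IH //; lia.
Qed.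

Lemma pos_solution_mkseq s : pos_solution a b c s ->
  s = mkseq (linrec a b c s`_0 s`_1 s`_2) (size s).
Proof.
move=> sol_s; apply: (@eq_from_nth _ 0); first by rewrite size_mkseq.
by move=> i lt_i; rewrite nth_mkseq // pos_solution_nth.
Qed.

Lemma mkseq_linrec_pos_solution x y z k : 0 < x -> 0 < y -> 0 < z -> (3 <= k)%N ->
  pos_solution a b c (mkseq (linrec a b c x y z) k).
Proof.
move=> x_gt0 y_gt0 z_gt0 k_ge3; split; first by rewrite size_mkseq.
rewrite !nth_mkseq ?(leq_trans _ k_ge3) //; do 3!split=> //.
move=> -[|[|[|i]]] //; rewrite size_mkseq => /andP[_ lt_i].
by rewrite !nth_mkseq ?subSS ?subn0 ?linrec_rec //; lia.
Qed.

Lemma terminates_at_mkseq (f : nat -> int) k n :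
  terminates_at (mkseq f k.+1) n <-> f k = n%:Z.
Proof. by rewrite /terminates_at size_mkseq nth_mkseq. Qed.

Lemma not_t_infinite_bounded n k (N : nat) :
  (forall s, sol_kn a b c n k s -> forall i, (i < 3)%N -> s`_i < N%:Z) ->
  ~ t_infinite a b c n k.
Proof.
move=> bounded; pose sol_of (t : 'I_N * 'I_N * 'I_N) :=
  mkseq (linrec a b c t.1.1%:Z t.1.2%:Z t.2%:Z) k.
move=> /(_ (codom sol_of)) [s [sol_s /negP]]; apply.
have [pos_s [size_s _]] := sol_s; have [_ [s0 [s1 [s2 _]]]] := pos_s.
have lt0 : (absz (s`_0)%R < N)%N by have := bounded s sol_s 0%N isT; lia.
have lt1 : (absz (s`_1)%R < N)%N by have := bounded s sol_s 1%N isT; lia.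
have lt2 : (absz (s`_2)%R < N)%N by have := bounded s sol_s 2%N isT; lia.
suff -> : s = sol_of (Ordinal lt0, Ordinal lt1, Ordinal lt2) by apply: codom_f.
by rewrite /sol_of /= !gtz0_abs // -size_s -pos_solution_mkseq.
Qed.

Lemma t_le_uniq n k B l : t_le a b c n k B -> uniq l ->
  (forall s, s \in l -> sol_kn a b c n k s) -> (size l <= B)%N.
Proof.
move=> [l' [size_l' sols_in_l']] uniq_l sols_l.
apply: leq_trans size_l'; apply: uniq_leq_size uniq_l _ => s /sols_l.
exact: sols_in_l'.
Qed.

End LinearRecurrence.

Section Recurrence112.
Variables x y z : int.
Let u := linrec 1 1 2 x y z.
Let S := x + y + z.
Let dev i := 7 * u i - 2 ^+ i * S.

Lemma dev_sum3 i : dev i + dev i.+1 + dev i.+2 = 0.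
Proof.
rewrite /dev; elim: i => [|i IH]; first by rewrite /u /S /=; lia.
rewrite /u linrec_rec -/u !exprS; move: IH; rewrite !exprS; lia.
Qed.

Lemma dev_period i : dev i.+3 = dev i.
Proof. by have := dev_sum3 i; have := dev_sum3 i.+1; lia. Qed.

Lemma dev_mul3 q r : dev (3 * q + r) = dev r.
Proof. by elim: q => [|q IH] //; rewrite mulnSr addnAC addn3 dev_period. Qed.

Lemma seven_linrec_mul3 q : 7 * u (3 * q) = 2 ^+ (3 * q) * S + 7 * x - S.
Proof. by have := dev_mul3 q 0; rewrite addn0 /dev /u /=; lia. Qed.

Hypotheses (x_gt0 : 0 < x) (y_gt0 : 0 < y) (z_gt0 : 0 < z).

Lemma seven_linrec_bounds i : 2 ^+ i * S - 4 * S < 7 * u i < 2 ^+ i * S + 6 * S.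
Proof.
suff : -4 * S < dev i < 6 * S by rewrite /dev; lia.
rewrite (divn_eq i 3) mulnC dev_mul3.
by case: (i %% 3)%N (ltn_pmod i (isT : (0 < 3)%N)) => [|[|[|]]] //= _;
  rewrite /dev /u /S /=; lia.
Qed.

End Recurrence112.

Lemma odd_multiple_neq_even_multiple (P R Z : int) (S : nat) :
  odd S -> 11 * S%:Z <= P -> 0 < R -> -4 * R < Z < 6 * R ->
  P * S%:Z + 7 - S%:Z != P * (2 * R) + Z.
Proof.
(* 2R <> S by parity, and P |2R - S| then outweighs the other terms. *)
move=> S_odd P_ge R_gt0 Z_bounds; apply/eqP => E.
have S_eq : S = (S./2.*2).+1 by rewrite -[in LHS](odd_double_half S) S_odd.
have [R_gt | R_lt] : S%:Z + 1 <= 2 * R \/ 2 * R <= S%:Z - 1 by lia.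
- have : (S%:Z + 1) * (P - 2) <= 2 * R * (P - 2) by apply: ler_wpM2r; lia.
  lia.
- have : 2 * R * (P + 3) <= (S%:Z - 1) * (P + 3) by apply: ler_wpM2r; lia.
  lia.
Qed.

Lemma seven_end_bounds s n : pos_solution 1 1 2 s -> terminates_at s n ->
  2 ^+ (size s).-1 * (s`_0 + s`_1 + s`_2) - 4 * (s`_0 + s`_1 + s`_2) < 7 * n%:Z <
  2 ^+ (size s).-1 * (s`_0 + s`_1 + s`_2) + 6 * (s`_0 + s`_1 + s`_2).
Proof.
move=> sol_s end_s; have [size_s [s0 [s1 [s2 _]]]] := sol_s.
rewrite -end_s (pos_solution_nth (i := (size s).-1) sol_s); last by lia.
exact: seven_linrec_bounds.
Qed.

Lemma exp2_ge_mul11 (n k : nat) : (n + 4 <= k)%N -> 11 * n%:Z <= 2 ^+ k.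
Proof.
move=> le_k; have n_lt : (n < 2 ^ n)%N := ltn_expl n (isT : (1 < 2)%N).
have : (2 ^ n * 2 ^ 4 <= 2 ^ k)%N by rewrite -expnD leq_exp2l.
by rewrite -natz -natrX natz; lia.
Qed.

Section Counterexample.
Variable S : nat.
Hypotheses (S_odd : odd S) (S_ge3 : (3 <= S)%N).

(* A multiple of 3, so that d_m = d_0, with 2^m >= 11 S. *)
Let m := (3 * S.+4)%N.

Definition witness_fun (j : nat) := linrec 1 1 2 1 j.+1%:Z (S%:Z - 2 - j%:Z).

Definition witness (j : nat) := mkseq (witness_fun j) m.+1.

Definition witness_end : nat := absz (witness_fun 0 m).

Let n := witness_end.

Let big_power : 11 * S%:Z <= 2 ^+ m.
Proof. by apply: exp2_ge_mul11; lia. Qed.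

Lemma seven_witness_last j : (j < S - 2)%N ->
  7 * witness_fun j m = 2 ^+ m * S%:Z + 7 - S%:Z.
Proof. by move=> lt_j; rewrite seven_linrec_mul3 -/m; lia. Qed.

Lemma seven_witness_end : 7 * n%:Z = 2 ^+ m * S%:Z + 7 - S%:Z.
Proof.
have lt0 : (0 < S - 2)%N by lia.
by have := seven_witness_last lt0; have := big_power; rewrite /n /witness_end; lia.
Qed.

Lemma witness_sol j : (j < S - 2)%N -> sol_kn 1 1 2 n m.+1 (witness j).
Proof.
move=> lt_j; split; first by apply: mkseq_linrec_pos_solution; lia.
split; first by rewrite size_mkseq.
apply/terminates_at_mkseq; have := seven_witness_last lt_j.
by have := seven_witness_end; lia.
Qed.

Lemma witness_end_is_k : is_k 1 1 2 n m.+1.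
Proof.
split; first by exists (witness 0); apply: witness_sol; lia.
move=> s sol_s end_s; rewrite leqNgt; apply/negP => long_s.
have [_ [s0 [s1 [s2 _]]]] := sol_s.
set T := s`_0 + s`_1 + s`_2.
have := seven_end_bounds sol_s end_s; rewrite -/T.
set e := (size s - m.+2)%N; set R := 2 ^+ e * T.
have split_pow : 2 ^+ (size s).-1 * T = 2 ^+ m * (2 * R).
  by rewrite /R !mulrA -exprSr -exprD; congr (_ ^+ _ * _); lia.
have T_le_R : T <= R by apply: ler_peMl; [lia | exact: exprn_ege1].
rewrite split_pow => bounds.
have R_gt0 : 0 < R by lia.
have Z_bounds : -4 * R < 7 * n%:Z - 2 ^+ m * (2 * R) < 6 * R by apply/andP; lia.
have /eqP[] := odd_multiple_neq_even_multiple S_odd big_power R_gt0 Z_bounds.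
by have := seven_witness_end; lia.
Qed.

Lemma witness_end_not_t_infinite : ~ t_infinite 1 1 2 n m.+1.
Proof.
apply: (not_t_infinite_bounded (N := n)) => s [sol_s [size_s end_s]] i lt_i3.
have [_ [s0 [s1 [s2 _]]]] := sol_s.
have := seven_end_bounds sol_s end_s; rewrite size_s succnK.
have : 11 * (s`_0 + s`_1 + s`_2) <= 2 ^+ m * (s`_0 + s`_1 + s`_2).
  by apply: ler_wpM2r; [lia | have := big_power; lia].
by case: i lt_i3 => [|[|[|]]] // _; lia.
Qed.

Lemma witness_end_not_t_le B : (B < S - 2)%N -> ~ t_le 1 1 2 n m.+1 B.
Proof.
move=> lt_B t_le_B; have witness_inj : {in iota 0 (S - 2) &, injective witness}.
  by move=> j1 j2 _ _ /(congr1 (nth 0 ^~ 1)); rewrite !nth_mkseq ?ltnS ?muln_gt0 // => -[].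
suff : (S - 2 <= B)%N by rewrite leqNgt lt_B.
rewrite -(size_iota 0 (S - 2)) -(size_map witness); apply: t_le_uniq t_le_B _ _.
  by rewrite map_inj_in_uniq ?iota_uniq.
move=> s /mapP[j]; rewrite mem_iota => /andP[_ lt_j] ->; exact: witness_sol.
Qed.

Lemma witness_end_gt0 : (0 < n)%N.
Proof. by have := seven_witness_end; have := big_power; lia. Qed.

End Counterexample.

Theorem lemma6 : ~ congenial 1 1 2.
Proof.
move=> [B congB]; pose S := (2 * B + 3)%N.
have S_odd : odd S by rewrite oddD oddM.
have S_ge3 : (3 <= S)%N by rewrite leq_addl.
have [t_inf | t_le_B] := congB _ (witness_end_gt0 S_odd S_ge3) _ (witness_end_is_k S_odd S_ge3).
- exact: witness_end_not_t_infinite t_inf.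
- by apply: witness_end_not_t_le t_le_B; lia.
Qed.
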